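(* Let $(X,\|\cdot\|_X)$ be a Banach space and $\mathcal{K}\subset X$. Then $\mathcal{K}$ is totally bounded if and only if for every $n\ge1$ one has $\lim_{\gamma\to\infty}d_n^\gamma(\mathcal{K})_X=0$.
   Context: $\mathcal{K}$ is totally bounded if for every $\varepsilon>0$ it is covered by finitely many closed balls of radius $\varepsilon$. For $k\ge1$ and a norm $\|\cdot\|_{Y_k}$ on $\mathbb{R}^k$ let $B_{Y_k}=\{y\in\mathbb{R}^k:\|y\|_{Y_k}\le1\}$. For $\gamma\ge0$, the fixed Lipschitz width is $d^\gamma(\mathcal{K},Y_k)_X=\inf_{\Phi}\sup_{f\in\mathcal{K}}\inf_{y\in B_{Y_k}}\|f-\Phi(y)\|_X\in[0,\infty]$, the infimum being over all maps $\Phi:B_{Y_k}\to X$ with $\|\Phi(y)-\Phi(y')\|_X\le\gamma\|y-y'\|_{Y_k}$ for all $y,y'\in B_{Y_k}$. The Lipschitz width is $d_n^\gamma(\mathcal{K})_X=\inf_{1\le k\le n}\inf_{\|\cdot\|_{Y_k}}d^\gamma(\mathcal{K},Y_k)_X$, where the inner infimum is over all norms on $\mathbb{R}^k$. *)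

From HB Require Import structures.
From mathcomp Require Import all_boot all_order all_algebra.
From mathcomp Require Import all_classical all_reals all_analysis.
Set Implicit Arguments. Unset Strict Implicit. Unset Printing Implicit Defensive.
Import Order.TTheory GRing.Theory Num.Theory.
Import numFieldNormedType.Exports.
Local Open Scope classical_set_scope.
Local Open Scope ring_scope.

Definition tot_bounded (R : realType) (X : normedModType R) (K : set X) : Prop :=
  forall eps : R, 0 < eps ->
    exists s : seq X, K `<=` [set x | exists2 c, c \in s & `|x - c| <= eps].

Definition is_norm (R : realType) (k : nat) (N : 'rV[R]_k -> R) : Prop :=
  [/\ forall y, 0 <= N y,
      forall y, N y = 0 -> y = 0,
      forall (a : R) y, N (a *: y) = `|a| * N y
    & forall y y', N (y + y') <= N y + N y'].

Definition unit_ballN (R : realType) (k : nat) (N : 'rV[R]_k -> R) : set 'rV[R]_k :=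
  [set y | N y <= 1].

Definition lip_on_ball (R : realType) (X : normedModType R) (k : nat)
  (N : 'rV[R]_k -> R) (gamma : R) (Phi : 'rV[R]_k -> X) : Prop :=
  forall y y', y \in unit_ballN N -> y' \in unit_ballN N ->
    `|Phi y - Phi y'| <= gamma * N (y - y').

(* sup_{f in K} inf_{y in B} ||f - Phi y||, in [0, +oo]
   (0 is added to the sup so that the empty K gives 0, as in [0,oo]). *)
Definition lip_err (R : realType) (X : normedModType R) (K : set X) (k : nat)
  (N : 'rV[R]_k -> R) (Phi : 'rV[R]_k -> X) : \bar R :=
  ereal_sup ([set 0%E] `|`
    [set ereal_inf [set (`|f - Phi y|)%:E | y in unit_ballN N] | f in K]).

Definition fixed_lipw (R : realType) (X : normedModType R) (K : set X) (k : nat)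
  (N : 'rV[R]_k -> R) (gamma : R) : \bar R :=
  ereal_inf [set lip_err K N Phi | Phi in [set Phi | lip_on_ball N gamma Phi]].

Definition lipw (R : realType) (X : normedModType R) (K : set X) (n : nat)
  (gamma : R) : \bar R :=
  ereal_inf [set e | exists k : nat, [/\ (1 <= k)%N, (k <= n)%N &
     exists N : 'rV[R]_k -> R, is_norm N /\ e = fixed_lipw K N gamma]].

(* If K is covered by the closed eps-balls around s_0, ..., s_(m-1), the
   piecewise-linear curve t |-> sum_i hat_i(t) s_i, which passes through s_i
   at the node t = i/m of [0, 1], is Lipschitz with constant
   m * sum_i |s_i|; using it as the map from the unit ball of (R, |.|) shows
   d_n^gamma(K) <= eps for all larger gamma.  Conversely, if
   d_1^gamma(K) < eps, then K lies within eps of the image of the unit ball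
   of a norm on R^1, i.e. of a compact segment, under a Lipschitz map; that
   image is totally bounded, hence so is K. *)

From HB Require Import structures.
From mathcomp Require Import all_boot all_order all_algebra.
From mathcomp Require Import all_classical all_reals all_analysis.
From mathcomp Require Import ring lra.
Import Order.TTheory GRing.Theory Num.Theory Num.Def.
Import numFieldNormedType.Exports.
Local Open Scope classical_set_scope.
Local Open Scope ring_scope.

Section HatFunctions.
Context {R : realType}.

Definition hat (m i : nat) (t : R) : R := maxr 0 (1 - `|m%:R * t - i%:R|).

Lemma dist_max0_le (a b : R) : `|maxr 0 a - maxr 0 b| <= `|a - b|.
Proof.
case: (leP 0 a) => ha; case: (leP 0 b) => hb.
- by [].
- rewrite subr0 (ger0_norm ha) ger0_norm; lra.
- rewrite sub0r normrN (ger0_norm hb) ler0_norm; lra.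
- by rewrite subrr normr0.
Qed.

Lemma hat_lipschitz m i (t t' : R) : `|hat m i t - hat m i t'| <= m%:R * `|t - t'|.
Proof.
apply: le_trans (dist_max0_le _ _) _.
rewrite (_ : _ - _ = `|m%:R * t' - i%:R| - `|m%:R * t - i%:R|); last by ring.
apply: le_trans (ler_dist_dist _ _) _.
rewrite (_ : _ - _ = m%:R * (t' - t)); last by ring.
by rewrite normrM ger0_norm // distrC.
Qed.

Lemma hat_node m i j : (0 < m)%N -> hat m i (j%:R / m%:R) = (i == j)%:R.
Proof.
move=> m0; rewrite /hat mulrC divfK ?pnatr_eq0 -?lt0n //.
have [->|ij] := eqVneq i j; first by rewrite subrr normr0 subr0 max_r ?ler01.
apply/max_l; rewrite subr_le0 ler_normr.
by case: ltngtP ij => // h _; move: h; rewrite -(ler_nat R) -natr1 => h;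
  apply/orP; [left|right]; lra.
Qed.

End HatFunctions.

Section PiecewiseLinearInterpolation.
Context {R : realType} {X : normedModType R}.

Definition interp (s : seq X) (t : R) : X :=
  \sum_(i < size s) hat (size s) i t *: s`_i.

Lemma interp_node s i : (i < size s)%N -> interp s (i%:R / (size s)%:R) = s`_i.
Proof.
move=> ilt; rewrite /interp.
under eq_bigr do rewrite hat_node ?(leq_ltn_trans (leq0n i) ilt) //.
rewrite (bigD1 (Ordinal ilt)) //= eqxx scale1r big1 ?addr0 // => j ji.
by rewrite -val_eqE in ji; rewrite (negbTE ji) scale0r.
Qed.

Lemma interp_lipschitz s (t t' : R) :
  `|interp s t - interp s t'| <=
    (size s)%:R * (\sum_(i < size s) `|s`_i|) * `|t - t'|.
Proof.
rewrite /interp -sumrB mulr_sumr mulr_suml.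
under eq_bigr do rewrite -scalerBl.
apply: le_trans (ler_norm_sum _ _ _) _; apply: ler_sum => i _.
by rewrite normrZ mulrAC ler_wpM2r // hat_lipschitz.
Qed.

End PiecewiseLinearInterpolation.

Section NormsOnTheLine.
Context {R : realType}.

Definition rV1_norm (y : 'rV[R]_1) : R := `|y ord0 ord0|.

Lemma rV1_norm_is_norm : is_norm rV1_norm.
Proof.
rewrite /rV1_norm; split => [y|y /normr0_eq0 y0|a y|y y'].
- exact: normr_ge0.
- by apply/rowP => i; rewrite ord1 mxE.
- by rewrite mxE normrM.
- by rewrite mxE ler_normD.
Qed.

Lemma is_norm_gt0 k (N : 'rV[R]_k -> R) y : is_norm N -> y != 0 -> 0 < N y.
Proof. by case=> N0 Nz _ _ y0; rewrite lt_def N0 andbT; apply: contra_neq y0 => /Nz. Qed.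

Lemma rV1_scale_const1 (y : 'rV[R]_1) : y = y ord0 ord0 *: const_mx 1.
Proof. by apply/rowP => i; rewrite ord1 !mxE mulr1. Qed.

End NormsOnTheLine.

Section LipschitzWidthBounds.
Context {R : realType} {X : normedModType R} (K : set X).

Lemma lipw_ge0 n gamma : (0 <= lipw K n gamma)%E.
Proof.
apply: le_ereal_inf_tmp => _ [k [_ _ [N [_ ->]]]].
apply: le_ereal_inf_tmp => _ [Phi _ <-].
by apply: ereal_sup_ubound; left.
Qed.

Lemma lipw_le_fixed_lipw n k (N : 'rV[R]_k -> R) gamma :
  (1 <= k <= n)%N -> is_norm N -> (lipw K n gamma <= fixed_lipw K N gamma)%E.
Proof.
by case/andP=> k1 kn Nnorm; apply: ereal_inf_lbound; exists k; split => //; exists N.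
Qed.

Lemma fixed_lipw_le k (N : 'rV[R]_k -> R) gamma Phi (eps : R) :
  0 <= eps -> lip_on_ball N gamma Phi ->
  (forall f, K f -> exists2 y, N y <= 1 & `|f - Phi y| <= eps) ->
  (fixed_lipw K N gamma <= eps%:E)%E.
Proof.
move=> eps0 Phi_lip Phi_approx.
apply: (@le_trans _ _ (lip_err K N Phi)); first by apply: ereal_inf_lbound; exists Phi.
apply: ge_ereal_sup => _ [-> | [f Kf <-]]; first by rewrite lee_fin.
have [y yB fy] := Phi_approx f Kf.
by apply: ge_ereal_inf; exists (`|f - Phi y|)%:E; [exists y | rewrite lee_fin].
Qed.

Lemma lipw_le_net n (s : seq X) (eps gamma : R) :
  (1 <= n)%N -> 0 <= eps ->
  K `<=` [set x | exists2 c, c \in s & `|x - c| <= eps] ->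
  (size s)%:R * (\sum_(i < size s) `|s`_i|) <= gamma ->
  (lipw K n gamma <= eps%:E)%E.
Proof.
move=> n1 eps0 Ks gamma_ge.
apply: (le_trans (@lipw_le_fixed_lipw n 1 _ gamma _ rV1_norm_is_norm)); first by rewrite n1.
apply: (@fixed_lipw_le _ _ _ (fun y => interp s (y ord0 ord0))) => //.
  move=> y y' _ _; apply: le_trans (interp_lipschitz _ _ _) _.
  by rewrite /rV1_norm !mxE; apply: ler_wpM2r.
move=> f /Ks[c cs fc].
have ilt : (index c s < size s)%N by rewrite index_mem.
exists (const_mx ((index c s)%:R / (size s)%:R)); last first.
  by rewrite mxE interp_node // nth_index.
rewrite /rV1_norm mxE ger0_norm // ler_pdivrMr ?ltr0n ?(leq_ltn_trans (leq0n _) ilt) //.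
by rewrite mul1r ler_nat ltnW.
Qed.

Lemma lipw1_lt gamma (x : \bar R) : (lipw K 1 gamma < x)%E ->
  exists2 N : 'rV[R]_1 -> R, is_norm N & (fixed_lipw K N gamma < x)%E.
Proof.
case/ereal_inf_lt => _ [k [k1 k1' [N [Nnorm ->]]]] Nlt.
have k_eq1 : k = 1%N by apply/eqP; rewrite eqn_leq k1 k1'.
by subst k; exists N.
Qed.

Lemma fixed_lipw_lt k (N : 'rV[R]_k -> R) gamma (eps : R) :
  (fixed_lipw K N gamma < eps%:E)%E -> exists2 Phi, lip_on_ball N gamma Phi &
    forall f, K f -> exists2 y, N y <= 1 & `|f - Phi y| <= eps.
Proof.
case/ereal_inf_lt => _ [Phi Phi_lip <-] err_lt; exists Phi => // f Kf.
have : (ereal_inf [set (`|f - Phi y|)%:E | y in unit_ballN N] < eps%:E)%E.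
  by apply: le_lt_trans err_lt; apply: ereal_sup_ubound; right; exists f.
by case/ereal_inf_lt => _ [y yB <-]; rewrite lte_fin => /ltW; exists y.
Qed.

End LipschitzWidthBounds.

Lemma ge0_cvge0 {R : realType} {T : Type} {F : set_system T} {FF : Filter F}
    (f : T -> \bar R) :
  (forall x, 0 <= f x)%E ->
  (forall eps : R, 0 < eps -> \forall x \near F, (f x <= eps%:E)%E) ->
  f @ F --> 0%E.
Proof.
move=> f_ge0 f_small A /nbhs_EFin /nbhs_ballP[e e0 eA].
have e20 : 0 < e / 2 by rewrite divr_gt0.
apply: filterS (f_small _ e20) => x fx /=.
have f_fin : f x \is a fin_num by rewrite ge0_fin_numE // (le_lt_trans fx) ?ltry.
rewrite -(fineK f_fin); apply: eA.
move: (f_ge0 x) fx; rewrite -(fineK f_fin) !lee_fin /ball /= sub0r normrN => h0 h1.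
by rewrite ger0_norm //; lra.
Qed.

Lemma tot_bounded_lipw_cvg0 {R : realType} {X : normedModType R} (K : set X) n :
  (1 <= n)%N -> tot_bounded K -> (fun gamma : R => lipw K n gamma) @ +oo --> 0%E.
Proof.
move=> n1 Ktb; apply: ge0_cvge0 => [gamma|eps eps0]; first exact: lipw_ge0.
have [s Ks] := Ktb eps eps0.
apply: filterS (nbhs_pinfty_ge (num_real ((size s)%:R * \sum_(i < size s) `|s`_i|))).
by move=> gamma; apply: lipw_le_net => //; apply: ltW.
Qed.

Section TotalBoundedness.
Context {R : realType} {X : normedModType R}.

Lemma tot_bounded_approx (K : set X) :
  (forall eps : R, 0 < eps -> exists2 A : set X,
     tot_bounded A & forall f, K f -> exists2 a, A a & `|f - a| <= eps) ->
  tot_bounded K.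
Proof.
move=> K_approx eps eps0; have eps20 : 0 < eps / 2 by rewrite divr_gt0.
have [A Atb KA] := K_approx _ eps20; have [s As] := Atb _ eps20.
exists s => f /KA[a /As[c cs ac] fa]; exists c => //.
rewrite (_ : f - c = (f - a) + (a - c)); last by rewrite addrA subrK.
by apply: le_trans (ler_normD _ _) _; lra.
Qed.

Lemma segment_net (a b d : R) : 0 < d -> exists s : seq R,
  {subset s <= `[a, b]} /\
  forall t, t \in `[a, b] -> exists2 t', t' \in s & `|t - t'| < d.
Proof.
move=> d0; have := @segment_compact R a b; rewrite compact_cover.
case/(_ R `[a, b]%classic (fun t => ball t d)) => [t _|t tab|D Dab Dcov].
- exact: ball_open.
- by exists t => //; apply: ballxx.
exists (finmap.enum_fset D); split => [t /Dab|t tab]; first by rewrite inE.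
by have [t' t'D tt'] := Dcov t tab; exists t' => //; rewrite distrC.
Qed.

Lemma lipschitz_segment_image_tot_bounded (a b c : R) (h : R -> X) :
  {in `[a, b] &, forall s t, `|h s - h t| <= c * `|s - t|} ->
  tot_bounded (h @` [set t | t \in `[a, b]]).
Proof.
move=> h_lip eps eps0.
have c1 : 0 < `|c| + 1 by have := normr_ge0 c; lra.
have [s [sab s_net]] := segment_net a b _ (divr_gt0 eps0 c1).
exists (map h s) => _ [t tab <-]; have [t' t's tt'] := s_net t tab.
exists (h t'); first exact: map_f.
apply: le_trans (h_lip _ _ tab (sab _ t's)) _.
move: tt'; rewrite ltr_pdivlMr // => tt'.
by have := ler_norm c; have := normr_ge0 (t - t'); nra.
Qed.

End TotalBoundedness.

Lemma lip_on_ball_image_tot_bounded {R : realType} {X : normedModType R}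
    (N : 'rV[R]_1 -> R) gamma (Phi : 'rV[R]_1 -> X) :
  is_norm N -> lip_on_ball N gamma Phi -> tot_bounded (Phi @` unit_ballN N).
Proof.
move=> Nnorm Phi_lip; have [_ _ NZ _] := Nnorm.
pose e1 : 'rV[R]_1 := const_mx 1.
have Ne1 : 0 < N e1.
  by apply: is_norm_gt0 => //; apply/eqP => /rowP/(_ ord0)/eqP; rewrite !mxE oner_eq0.
pose L := 1 / N e1.
have ballE t : unit_ballN N (t *: e1) = (t \in `[-L, L]).
  by rewrite /unit_ballN /= in_itv /= -ler_norml NZ ler_pdivlMr.
move=> eps eps0.
have [|s Hs] := @lipschitz_segment_image_tot_bounded _ _ (- L) L (gamma * N e1)
  (fun t => Phi (t *: e1)) _ eps eps0.
  move=> t t' tL t'L; rewrite -ballE in tL; rewrite -ballE in t'L.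
  apply: le_trans (Phi_lip _ _ (mem_set tL) (mem_set t'L)) _.
  by rewrite -scalerBl NZ [X in _ <= X]mulrAC mulrA.
exists s => _ [y yB <-]; apply: Hs; exists (y ord0 ord0) => /=.
  by rewrite -ballE -rV1_scale_const1.
by rewrite -rV1_scale_const1.
Qed.

Lemma lipw_cvg0_tot_bounded {R : realType} {X : normedModType R} (K : set X) :
  (fun gamma : R => lipw K 1 gamma) @ +oo --> 0%E -> tot_bounded K.
Proof.
move=> lipw_cvg0; apply: tot_bounded_approx => eps eps0.
have [gamma lipw_lt] : exists gamma, (lipw K 1 gamma < eps%:E)%E.
  apply: (@filter_ex _ (nbhs +oo)).
  by apply: (lipw_cvg0 (fun u => u < eps%:E)%E); apply: open_ereal_lt'; rewrite lte_fin.
have /lipw1_lt[N Nnorm /fixed_lipw_lt[Phi Phi_lip Phi_approx]] := lipw_lt.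
exists (Phi @` unit_ballN N).
  exact: (lip_on_ball_image_tot_bounded _ _ _ Nnorm Phi_lip).
by move=> f /Phi_approx[y yB fy]; exists (Phi y) => //; exists y.
Qed.

Theorem lemma2p6 (R : realType) (X : completeNormedModType R) (K : set X) :
  tot_bounded K <->
  (forall n : nat, (1 <= n)%N ->
     (fun gamma : R => lipw K n gamma) @ +oo --> (0 : \bar R)).
Proof.
split=> [Ktb n n1|lipw_cvg0]; first exact: tot_bounded_lipw_cvg0.
exact/lipw_cvg0_tot_bounded/lipw_cvg0.
Qed.
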